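(* Let $G$ be an infinite group. Then $G$ is $L^1$-surjunctive if and only if for every field $k$ the ring $D^1(k[G])$ is stably finite.
   Context: For a vector space $V$, $g\in G$, $x\in V^G$: $(gx)(h)=x(g^{-1}h)$. For finite $M\subset G$, $S=\mathcal{L}(V^M,V)$, $s\in S^G$: $\sigma_s(x)(g)=s(g)((g^{-1}x)\vert_M)$. $\mathrm{LNUCA}_c(G,V)$ is the set of $\sigma_s$ with $M$ finite and $s$ constant outside a finite subset of $G$. $\Sigma(s)$ is the closure of $\{gs\}$ in $S^G$ (prodiscrete topology); $\sigma_s$ is stably injective if $\sigma_p$ is injective for all $p\in\Sigma(s)$. $G$ is $L^1$-surjunctive if for every finite-dimensional vector space $V$ over any field, every stably injective $\tau\in\mathrm{LNUCA}_c(G,V)$ is surjective. $D^1(k[G])=k[G]\times(k[G])[G]$ ($(k[G])[G]$ = finitely supported maps $G\to k[G]$) with componentwise addition and multiplication $(\alpha_1,\beta_1)*(\alpha_2,\beta_2)=(\alpha_1\alpha_2,\alpha_1\beta_2+\beta_1\alpha_2+\beta_1\beta_2)$, where $\alpha_1\alpha_2$ is the group ring product and $(\alpha\beta)(g)(h)=\sum_t\alpha(t)\beta(gt)(t^{-1}h)$, $(\beta\alpha)(g)(h)=\sum_t\beta(g)(t)\alpha(t^{-1}h)$, $(\beta\gamma)(g)(h)=\sum_t\beta(g)(t)\gamma(gt)(t^{-1}h)$. A ring $R$ is stably finite if for all $n\ge1$, $ab=1$ implies $ba=1$ in $M_n(R)$. *)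

From HB Require Import structures.
From mathcomp Require Import all_boot all_order all_algebra.
From mathcomp Require Import finmap.
From mathcomp Require Import boolp classical_sets cardinality fsbigop.

Set Implicit Arguments.
Unset Strict Implicit.
Unset Printing Implicit Defensive.

Import GRing.Theory.

Local Open Scope classical_set_scope.
Local Open Scope fset_scope.
Local Open Scope ring_scope.

Section LNUCA.
Variables (G : groupType) (k : fieldType) (V : vectType k).

Definition shift_cfg (g : G) (x : G -> V) : G -> V :=
  fun h => x (g^-1 * h)%g.

Definition is_linear_local (M : {fset G}) (f : (M -> V) -> V) : Prop :=
  forall (a : k) (u v : M -> V),
    f (fun m => a *: u m + v m) = a *: f u + f v.

Definition local_rules (M : {fset G}) (s : G -> (M -> V) -> V) : Prop :=
  forall g, is_linear_local (s g).

(* sigma_s(x)(g) = s(g)((g^{-1} x)|_M); note (g^{-1}x)(m) = x(g m). *)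
Definition sigma (M : {fset G}) (s : G -> (M -> V) -> V) (x : G -> V) : G -> V :=
  fun g => s g (fun m : M => shift_cfg (g^-1)%g x (fsval m)).

Definition asympt_const (M : {fset G}) (s : G -> (M -> V) -> V) : Prop :=
  exists (F : {fset G}) (s0 : (M -> V) -> V), forall g, g \notin F -> s g = s0.

Definition shift_rule (M : {fset G}) (g : G) (s : G -> (M -> V) -> V)
  : G -> (M -> V) -> V := fun h => s (g^-1 * h)%g.

(* p lies in Sigma(s), the closure of the G-orbit of s in S^G for the
   prodiscrete topology (S discrete): every basic neighbourhood of p, given by a
   finite set F of coordinates, meets the orbit. *)
Definition in_orbit_closure (M : {fset G}) (s p : G -> (M -> V) -> V) : Prop :=
  forall F : {fset G}, exists g : G, forall h, h \in F -> p h = shift_rule g s h.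

Definition stably_injective (M : {fset G}) (s : G -> (M -> V) -> V) : Prop :=
  forall p, in_orbit_closure s p -> injective (sigma p).

End LNUCA.

Definition L1_surjunctive (G : groupType) : Prop :=
  forall (k : fieldType) (V : vectType k) (M : {fset G})
         (s : G -> (M -> V) -> V),
    local_rules s -> asympt_const s -> stably_injective s ->
    forall y : G -> V, exists x : G -> V, sigma s x = y.

Section D1.
Variables (G : groupType) (k : fieldType).

Definition fin_supp (T : zmodType) (f : G -> T) : Prop :=
  finite_set [set x | f x != 0].

Definition in_groupring (a : G -> k) : Prop := fin_supp a.

Definition in_groupring2 (b : G -> G -> k) : Prop :=
  (forall g, in_groupring (b g)) /\
  finite_set [set g | exists h, b g h != 0].

(* Elements of D^1(k[G]) = k[G] x (k[G])[G], as pairs of functions. *)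
Definition D1T : Type := ((G -> k) * (G -> G -> k))%type.

Definition inD1 (x : D1T) : Prop := in_groupring x.1 /\ in_groupring2 x.2.

Definition gr_mul (a1 a2 : G -> k) : G -> k :=
  fun h => \sum_(t \in [set: G]) a1 t * a2 (t^-1 * h)%g.

Definition ab_mul (a : G -> k) (b : G -> G -> k) : G -> G -> k :=
  fun g h => \sum_(t \in [set: G]) a t * b (g * t)%g (t^-1 * h)%g.

Definition ba_mul (b : G -> G -> k) (a : G -> k) : G -> G -> k :=
  fun g h => \sum_(t \in [set: G]) b g t * a (t^-1 * h)%g.

Definition bb_mul (b c : G -> G -> k) : G -> G -> k :=
  fun g h => \sum_(t \in [set: G]) b g t * c (g * t)%g (t^-1 * h)%g.

Definition D1_add (x y : D1T) : D1T :=
  (fun h => x.1 h + y.1 h, fun g h => x.2 g h + y.2 g h).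

Definition D1_mul (x y : D1T) : D1T :=
  (gr_mul x.1 y.1,
   fun g h => ab_mul x.1 y.2 g h + ba_mul x.2 y.1 g h + bb_mul x.2 y.2 g h).

Definition D1_zero : D1T := (fun _ => 0, fun _ _ => 0).

Definition D1_one : D1T :=
  (fun h => if h == 1%g then 1 else 0, fun _ _ => 0).

Definition D1_mxmul (n : nat) (A B : 'I_n -> 'I_n -> D1T) : 'I_n -> 'I_n -> D1T :=
  fun i j => \big[D1_add/D1_zero]_(l < n) D1_mul (A i l) (B l j).

Definition D1_mxone (n : nat) : 'I_n -> 'I_n -> D1T :=
  fun i j => if i == j then D1_one else D1_zero.

Definition D1_stably_finite : Prop :=
  forall (n : nat) (A B : 'I_n.+1 -> 'I_n.+1 -> D1T),
    (forall i j, inD1 (A i j)) -> (forall i j, inD1 (B i j)) ->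
    D1_mxmul A B = @D1_mxone n.+1 -> D1_mxmul B A = @D1_mxone n.+1.

End D1.

(* In coordinates, a linear NUCA on k^n is an operator with
   (c x)(g)_i = sum_(t, j) c g i j t * x(g t)_j, and composing such operators
   is multiplying matrices over D^1(k[G]): (alpha, beta) has coefficients
   alpha t + beta g t. Since G is infinite, alpha can be read off at positions
   g where beta vanishes, so this correspondence is faithful.
   If AB = 1, the finitely supported left inverse A of B only looks at a finite
   window and survives translation, so every limit of translates of B is
   injective; L^1-surjunctivity makes B surjective, and a surjective operator
   with a left inverse is invertible, whence BA = 1.
   Conversely, a stably injective sigma and its uniform part at infinity (a
   limit of translates) are injective. By linear duality (Zorn) every
   coordinate x(g)_j is then a finite combination of coordinates of sigma x;
   choosing these combinations translation-invariantly away from finitely many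
   positions gives a left inverse of sigma in M_n(D^1(k[G])), which stable
   finiteness turns into a right inverse: sigma is surjective. *)

From mathcomp Require Import all_boot all_order all_algebra.
From mathcomp Require Import boolp classical_sets cardinality.
From mathcomp Require Import finmap fsbigop ring.

Set Implicit Arguments.
Unset Strict Implicit.
Unset Printing Implicit Defensive.
Import GRing.Theory.
Local Open Scope classical_set_scope.
Local Open Scope ring_scope.

Lemma finite_set_fset_sub (T : choiceType) (A : set T) :
  finite_set A -> exists X : {fset T}, forall t, A t -> t \in X.
Proof. by move=> /finite_fsetP[X ->]; exists X. Qed.

Lemma infinite_setT_fresh (T : choiceType) (X : {fset T}) :
  infinite_set [set: T] -> exists t, t \notin X.
Proof.
move=> Tinf; apply: contrapT => /forallNP allX; apply: Tinf.
apply: (@sub_finite_set _ _ [set` X]); last exact: finite_fset.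
by move=> t _ /=; apply/negPn/negP; apply: allX.
Qed.

Lemma fsbigT_fset (T : choiceType) (R : nmodType) (f : T -> R) (S : {fset T}) :
  (forall t, t \notin S -> f t = 0) ->
  \sum_(t \in [set: T]) f t = \sum_(t <- S) f t.
Proof.
move=> fS; rewrite [RHS]fsbig_seq //; symmetry.
apply: fsbig_widen => // t [_ /= tS]; rewrite /preimage /= fS //; exact/negP.
Qed.

Section GroupSums.
Variables (G : groupType) (R : nmodType).

Definition mulfset (S1 S2 : {fset G}) : {fset G} :=
  [fset (a * b)%g | a in S1, b in S2]%fset.

Lemma mulfsetP (S1 S2 : {fset G}) a b :
  a \in S1 -> b \in S2 -> (a * b)%g \in mulfset S1 S2.
Proof. by move=> aS bS; apply/imfset2P; exists a => //; exists b. Qed.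

Lemma big_fset_translate (F : G -> R) t (S S' : {fset G}) :
  (forall v, v \notin S -> F v = 0) -> (forall v, v \in S -> (t * v)%g \in S') ->
  \sum_(u <- S') F (t^-1 * u)%g = \sum_(v <- S) F v.
Proof.
move=> FS SS'.
rewrite -(@fsbigT_fset _ _ (fun u => F (t^-1 * u)%g) S'); last first.
  by move=> u uS'; apply: FS; apply: contra uS' => /SS'; rewrite mulVKg.
rewrite -(fsbigT_fset FS) (reindex_fsbigT (fun v => (t * v)%g)).
  by apply: eq_fsbigr => v _; rewrite mulKg.
by exists (fun v => (t^-1 * v)%g) => v; rewrite ?mulKg ?mulVKg.
Qed.

End GroupSums.

Section NonUniformOperators.
Variables (G : groupType) (R : pzRingType) (n : nat).

Definition nuop := G -> 'I_n -> 'I_n -> G -> R.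
Definition cfg := G -> 'I_n -> R.

Definition nuact (c : nuop) (x : cfg) : cfg :=
  fun g i => \sum_(t \in [set: G]) \sum_(j < n) c g i j t * x (g * t)%g j.

Definition nucomp (c1 c2 : nuop) : nuop :=
  fun g i l u => \sum_(t \in [set: G]) \sum_(j < n)
                   c1 g i j t * c2 (g * t)%g j l (t^-1 * u)%g.

Definition nuid : nuop := fun _ i j t => if (i == j) && (t == 1%g) then 1 else 0.

Definition shift_nuop (g : G) (c : nuop) : nuop := fun h => c (g^-1 * h)%g.

Definition supported_in (c : nuop) (S : {fset G}) :=
  forall g i j t, t \notin S -> c g i j t = 0.

Lemma nuact_supp c S x g i : supported_in c S ->
  nuact c x g i = \sum_(t <- S) \sum_(j < n) c g i j t * x (g * t)%g j.
Proof. by move=> cS; apply: fsbigT_fset => t tS; apply: big1 => j _; rewrite cS // mul0r. Qed.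

Lemma nucomp_supp c1 c2 S g i l u : supported_in c1 S ->
  nucomp c1 c2 g i l u =
  \sum_(t <- S) \sum_(j < n) c1 g i j t * c2 (g * t)%g j l (t^-1 * u)%g.
Proof. by move=> cS; apply: fsbigT_fset => t tS; apply: big1 => j _; rewrite cS // mul0r. Qed.

Lemma supported_in_comp c1 c2 S1 S2 : supported_in c1 S1 -> supported_in c2 S2 ->
  supported_in (nucomp c1 c2) (mulfset S1 S2).
Proof.
move=> c1S c2S g i l u uS; rewrite (nucomp_supp _ _ _ _ _ c1S).
apply: big1_seq => t /andP[_ tS1]; apply: big1 => j _.
rewrite c2S ?mulr0 //; apply: contra uS => tuS.
by rewrite -[u](mulVKg t); apply: mulfsetP.
Qed.

Lemma supported_in_shift c S g : supported_in c S -> supported_in (shift_nuop g c) S.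
Proof. by move=> cS h i j t tS; apply: cS. Qed.

Lemma nuact_comp c1 c2 S1 S2 x : supported_in c1 S1 -> supported_in c2 S2 ->
  nuact c1 (nuact c2 x) = nuact (nucomp c1 c2) x.
Proof.
move=> c1S c2S; apply/funext => g; apply/funext => i.
set S12 := mulfset S1 S2.
rewrite (nuact_supp _ _ _ c1S) (nuact_supp _ _ _ (supported_in_comp c1S c2S)).
have inner t j : t \in S1 -> c1 g i j t * nuact c2 x (g * t)%g j =
   \sum_(u <- S12) \sum_(l < n)
     c1 g i j t * c2 (g * t)%g j l (t^-1 * u)%g * x (g * u)%g l.
  move=> tS1; rewrite (nuact_supp _ _ _ c2S) -(@big_fset_translate _ _
    (fun v => \sum_(l < n) c2 (g * t)%g j l v * x (g * t * v)%g l) t S2 S12); last first.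
  - by move=> v vS2; apply: mulfsetP.
  - by move=> v vS2; apply: big1 => l _; rewrite c2S // mul0r.
  rewrite mulr_sumr; apply: eq_bigr => u _; rewrite mulr_sumr; apply: eq_bigr => l _.
  by rewrite mulrA -mulgA mulVKg.
rewrite big_seq_cond (eq_bigr (fun t => \sum_(j < n) \sum_(u <- S12) \sum_(l < n)
     c1 g i j t * c2 (g * t)%g j l (t^-1 * u)%g * x (g * u)%g l)); last first.
  by move=> t /andP[tS1 _]; apply: eq_bigr => j _; apply: inner.
rewrite -big_seq_cond.
under eq_bigr => t _ do rewrite exchange_big.
rewrite exchange_big; apply: eq_bigr => u _.
under eq_bigr => t _ do rewrite exchange_big.
rewrite exchange_big; apply: eq_bigr => l _.
rewrite (nucomp_supp _ _ _ _ _ c1S) mulr_suml; apply: eq_bigr => t _.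
by rewrite mulr_suml.
Qed.

Lemma nuact_id x : nuact nuid x = x.
Proof.
apply/funext => g; apply/funext => i.
rewrite (@nuact_supp _ [fset 1%g]%fset); last first.
  by move=> h i' j t; rewrite /nuid inE => /negbTE ->; rewrite andbF.
rewrite big_seq_fset1 (bigD1 i) //= big1 ?addr0; first by rewrite /nuid !eqxx mul1r mulg1.
by move=> j /negbTE ji; rewrite /nuid eq_sym ji mul0r.
Qed.

Lemma nuact_shift g c x h i :
  nuact (shift_nuop g c) x h i = nuact c (fun h' => x (g * h')%g) (g^-1 * h)%g i.
Proof.
rewrite /nuact /shift_nuop; apply: eq_fsbigr => t _; apply: eq_bigr => j _.
by rewrite -mulgA mulVKg.
Qed.

Lemma nuact_shift_inv (a b : nuop) g x :
  (forall z, nuact a (nuact b z) = z) ->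
  nuact (shift_nuop g a) (nuact (shift_nuop g b) x) = x.
Proof.
move=> ab; apply/funext => h; apply/funext => i; rewrite nuact_shift.
have -> : (fun h' => nuact (shift_nuop g b) x (g * h')%g) =
          nuact b (fun h'' => x (g * h'')%g).
  by apply/funext => h'; apply/funext => j; rewrite nuact_shift mulKg.
by rewrite ab mulVKg.
Qed.

Lemma nuact_inj (c c' : nuop) : (forall x, nuact c x = nuact c' x) -> c = c'.
Proof.
move=> E; apply/funext => g; apply/funext => i; apply/funext => j; apply/funext => t.
pose x : cfg := fun h l => if (h == (g * t)%g) && (l == j) then 1 else 0.
have nuact_x (d : nuop) : nuact d x g i = d g i j t.
  rewrite /nuact (@fsbigT_fset _ _ _ [fset t]%fset); last first.
    move=> t' t't; apply: big1 => l _; rewrite /x.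
    case: eqP => [/mulgI tt|]; last by rewrite mulr0.
    by move: t't; rewrite tt inE eqxx.
  rewrite big_seq_fset1 (bigD1 j) //= big1 ?addr0; first by rewrite /x !eqxx mulr1.
  by move=> l /negbTE lj; rewrite /x eqxx lj mulr0.
by rewrite -nuact_x E nuact_x.
Qed.

Lemma nuact_left_inv_local (a b : nuop) S x1 x2 h :
  supported_in a S -> (forall z, nuact a (nuact b z) = z) ->
  (forall t, t \in S -> nuact b x1 (h * t)%g = nuact b x2 (h * t)%g) ->
  x1 h = x2 h.
Proof.
move=> aS ab bx12; apply/funext => j.
rewrite -(ab x1) -(ab x2) !(nuact_supp _ _ _ aS) big_seq [RHS]big_seq.
by apply: eq_bigr => t tS; rewrite bx12.
Qed.

End NonUniformOperators.

Section D1Operators.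
Variables (G : groupType) (k : fieldType) (n : nat).
Local Notation D1mx := ('I_n -> 'I_n -> D1T G k).

(* alpha is the uniform part of the operator, beta g its perturbation at g. *)
Definition D1_nuop (A : D1mx) : nuop G k n := fun g i j t => (A i j).1 t + (A i j).2 g t.

Definition D1mx_wf (A : D1mx) := forall i j, inD1 (A i j).

Definition finite_beta (A : D1mx) := exists T : {fset G},
  forall g, g \notin T -> forall i j t, (A i j).2 g t = 0.

Lemma D1mx_supp (A : D1mx) : D1mx_wf A -> exists S : {fset G},
  forall i j t, t \notin S -> (A i j).1 t = 0 /\ forall g, (A i j).2 g t = 0.
Proof.
move=> Awf.
pose U := \bigcup_(p in [set: 'I_n * 'I_n]) ([set t | (A p.1 p.2).1 t != 0] `|`
   \bigcup_(g in [set g | exists h, (A p.1 p.2).2 g h != 0])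
     [set t | (A p.1 p.2).2 g t != 0]).
have Ufin : finite_set U.
  apply: bigcup_finite; first exact: finite_finset.
  move=> [i j] _ /=; have [A1 [A2 A3]] := Awf i j.
  rewrite finite_setU; split; first exact: A1.
  by apply: bigcup_finite => // g _; apply: A2.
have [X UX] := finite_set_fset_sub Ufin; exists X => i j t tX; split.
  apply/eqP/negP => /negP nz; move/negP: tX; apply; apply: UX.
  by exists (i, j) => //; left.
move=> g; apply/eqP/negP => /negP nz; move/negP: tX; apply; apply: UX.
by exists (i, j) => //; right; exists g => //; exists t.
Qed.

Lemma D1mx_supported_in (A : D1mx) S :
  (forall i j t, t \notin S -> (A i j).1 t = 0 /\ forall g, (A i j).2 g t = 0) ->
  supported_in (D1_nuop A) S.
Proof. by move=> AS g i j t tS; rewrite /D1_nuop; have [-> ->] := AS i j t tS; rewrite addr0. Qed.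

Lemma D1mx_wf_finite_beta (A : D1mx) : D1mx_wf A -> finite_beta A.
Proof.
move=> Awf.
pose U := \bigcup_(p in [set: 'I_n * 'I_n]) [set g | exists h, (A p.1 p.2).2 g h != 0].
have Ufin : finite_set U.
  apply: bigcup_finite; first exact: finite_finset.
  by move=> [i j] _ /=; have [_ []] := Awf i j.
have [X UX] := finite_set_fset_sub Ufin; exists X => g gX i j t.
apply/eqP/negP => /negP nz; move/negP: gX; apply; apply: UX.
by exists (i, j) => //; exists t.
Qed.

Lemma D1_mxmul_fst (A B : D1mx) i l h :
  (D1_mxmul A B i l).1 h = \sum_(j < n) gr_mul (A i j).1 (B j l).1 h.
Proof. exact: (big_morph (fun x : D1T G k => x.1 h)). Qed.

Lemma D1_mxmul_snd (A B : D1mx) i l g h :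
  (D1_mxmul A B i l).2 g h = \sum_(j < n) (ab_mul (A i j).1 (B j l).2 g h +
     ba_mul (A i j).2 (B j l).1 g h + bb_mul (A i j).2 (B j l).2 g h).
Proof. exact: (big_morph (fun x : D1T G k => x.2 g h)). Qed.

Lemma D1_nuop_mul (A B : D1mx) : D1mx_wf A ->
  D1_nuop (D1_mxmul A B) = nucomp (D1_nuop A) (D1_nuop B).
Proof.
move=> Awf; have [S AS] := D1mx_supp Awf.
apply/funext => g; apply/funext => i; apply/funext => l; apply/funext => u.
rewrite (nucomp_supp _ _ _ _ _ (D1mx_supported_in AS)) /D1_nuop.
rewrite D1_mxmul_fst D1_mxmul_snd -big_split /= exchange_big; apply: eq_bigr => j _.
rewrite /gr_mul /ab_mul /ba_mul /bb_mul.
have [a0 b0] : (forall t, t \notin S -> (A i j).1 t = 0) /\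
               (forall t, t \notin S -> (A i j).2 g t = 0).
  by split => t tS; have [H1 H2] := AS i j t tS.
rewrite !(@fsbigT_fset _ _ _ S); try by move=> t tS; rewrite ?a0 ?b0 ?mul0r.
rewrite -!big_split; apply: eq_bigr => t _ /=; ring.
Qed.

Lemma D1_mxmul_finite_beta (A B : D1mx) : D1mx_wf A -> D1mx_wf B ->
  finite_beta (D1_mxmul A B).
Proof.
move=> Awf Bwf; have [S AS] := D1mx_supp Awf.
have [TA ATA] := D1mx_wf_finite_beta Awf; have [TB BTB] := D1mx_wf_finite_beta Bwf.
exists (TA `|` TB `|` [fset (a * b^-1)%g | a in TB, b in S])%fset.
move=> g; rewrite !inE => /norP[/norP[gTA gTB] gX] i l h.
rewrite D1_mxmul_snd; apply: big1 => j _.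
rewrite /ab_mul /ba_mul /bb_mul !fsbig1 ?addr0 // => t _; try by rewrite ATA // mul0r.
have [tS|tS] := boolP (t \in S); last by have [-> _] := AS i j t tS; rewrite mul0r.
rewrite BTB ?mulr0 //; apply: contra gX => gtB.
by apply/imfset2P; exists (g * t)%g => //; exists t => //; rewrite mulgK.
Qed.

Lemma D1_mxone_finite_beta : finite_beta (@D1_mxone G k n).
Proof. by exists fset0 => g _ i j t; rewrite /D1_mxone; case: (i == j). Qed.

Lemma D1_nuop_one : D1_nuop (@D1_mxone G k n) = @nuid G k n.
Proof.
apply/funext => g; apply/funext => i; apply/funext => j; apply/funext => t.
by rewrite /D1_nuop /D1_mxone /nuid; case: (i == j) => /=; rewrite addr0.
Qed.

Lemma D1_nuop_inj (X Y : D1mx) : infinite_set [set: G] ->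
  finite_beta X -> finite_beta Y -> D1_nuop X = D1_nuop Y -> X = Y.
Proof.
move=> Ginf [TX XT] [TY YT] E.
have [g0] := infinite_setT_fresh (TX `|` TY)%fset Ginf.
rewrite inE => /norP[g0X g0Y].
apply/funext => i; apply/funext => j.
have E1 : (X i j).1 = (Y i j).1.
  apply/funext => t; have := congr1 (fun c => c g0 i j t) E.
  by rewrite /D1_nuop XT // YT // !addr0.
rewrite [X i j]surjective_pairing [Y i j]surjective_pairing E1; congr pair.
apply/funext => g; apply/funext => t; have := congr1 (fun c => c g i j t) E.
by rewrite /D1_nuop E1 => /addrI.
Qed.

Definition D1mx_of_nuop (c : nuop G k n) (c0 : 'I_n -> 'I_n -> G -> k) : D1mx :=
  fun i j => (c0 i j, fun g t => c g i j t - c0 i j t).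

Lemma D1_nuop_of c c0 : D1_nuop (D1mx_of_nuop c c0) = c.
Proof.
apply/funext => g; apply/funext => i; apply/funext => j; apply/funext => t.
by rewrite /D1_nuop /= addrC subrK.
Qed.

Lemma D1mx_of_nuop_wf c c0 (S T : {fset G}) :
  supported_in c S -> supported_in (fun _ : G => c0) S ->
  (forall g, g \notin T -> c g = c0) -> D1mx_wf (D1mx_of_nuop c c0).
Proof.
move=> cS c0S cT i j; split; [|split] => /=.
- apply: (@sub_finite_set _ _ [set` S]); last exact: finite_fset.
  by move=> t /= nz; apply/negPn/negP => tS; move: nz; rewrite (c0S 1%g) ?eqxx.
- move=> g; apply: (@sub_finite_set _ _ [set` S]); last exact: finite_fset.
  by move=> t /= nz; apply/negPn/negP => tS; move: nz; rewrite (c0S 1%g) ?cS ?subrr ?eqxx.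
- apply: (@sub_finite_set _ _ [set` T]); last exact: finite_fset.
  by move=> g /= [t nz]; apply/negPn/negP => gT; move: nz; rewrite cT ?subrr ?eqxx.
Qed.

End D1Operators.

Section ConvolutionRules.
Variables (G : groupType) (k : fieldType) (n : nat).
Local Notation V := 'rV[k]_n.

Definition conv_rule (S : {fset G}) (c : 'I_n -> 'I_n -> G -> k) : (S -> V) -> V :=
  fun u => \row_i \sum_(m : S) \sum_(j < n) c i j (fsval m) * u m 0 j.

Definition row_cfg (x : G -> V) : cfg G k n := fun g j => x g 0 j.

Lemma conv_rule_linear (S : {fset G}) c : is_linear_local (@conv_rule S c).
Proof.
move=> a u v; apply/rowP => i; rewrite !mxE mulr_sumr -big_split /=.
apply: eq_bigr => m _; rewrite mulr_sumr -big_split /=.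
by apply: eq_bigr => j _; rewrite !mxE; ring.
Qed.

Lemma sigma_conv_rule (S : {fset G}) (p : G -> (S -> V) -> V) (b : nuop G k n) x h :
  supported_in b S -> p h = conv_rule (b h) ->
  row_cfg (sigma p x) h = nuact b (row_cfg x) h.
Proof.
move=> bS ph; apply/funext => i; rewrite /row_cfg /sigma ph mxE (nuact_supp _ _ _ bS).
rewrite big_seq_fsetE /=; apply: eq_bigr => m _; apply: eq_bigr => j _.
by rewrite /shift_cfg invgK.
Qed.

(* Every p in the orbit closure coincides near h with a translate of the
   rules, and translates of b keep the local left inverse a. *)
Lemma conv_rules_stably_injective (a b : nuop G k n) SA SB :
  supported_in a SA -> supported_in b SB -> (forall z, nuact a (nuact b z) = z) ->
  stably_injective (fun g => @conv_rule SB (b g)).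
Proof.
move=> aS bS ab p ps x1 x2 E; apply/funext => h; apply/rowP => j.
have [g pg] := ps [fset (h * t)%g | t in SA]%fset.
suff /(congr1 (fun f => f j)) : row_cfg x1 h = row_cfg x2 h by [].
apply: (nuact_left_inv_local (supported_in_shift g aS) (fun z => nuact_shift_inv g z ab)).
move=> t tSA; have ph : p (h * t)%g = conv_rule (shift_nuop g b (h * t)%g).
  by rewrite pg //; apply/imfsetP; exists t.
by rewrite -!(sigma_conv_rule _ (supported_in_shift g bS) ph) E.
Qed.

Lemma nuact_surj_of_L1_surjunctive (a b : nuop G k n) SA SB (T : {fset G}) b0 :
  L1_surjunctive G ->
  supported_in a SA -> supported_in b SB -> (forall g, g \notin T -> b g = b0) ->
  (forall z, nuact a (nuact b z) = z) -> forall y, exists x, nuact b x = y.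
Proof.
move=> L1 aS bS bT ab y.
have [|x sx] := L1 k _ SB _ (fun g => conv_rule_linear (b g)) _
  (conv_rules_stably_injective aS bS ab) (fun g => \row_i y g i).
  by exists T, (conv_rule b0) => g gT; rewrite bT.
exists (row_cfg x); apply/funext => g; apply/funext => i.
by rewrite -(sigma_conv_rule (p := fun g => @conv_rule SB (b g)) x bS) // sx /row_cfg mxE.
Qed.

End ConvolutionRules.

Lemma L1_surjunctive_stably_finite (G : groupType) :
  infinite_set [set: G] -> L1_surjunctive G -> forall k : fieldType, D1_stably_finite G k.
Proof.
move=> Ginf L1 k n A B Awf Bwf AB.
have [SA /D1mx_supported_in aS] := D1mx_supp Awf.
have [SB BS] := D1mx_supp Bwf; have bS := D1mx_supported_in BS.
have [TB BTB] := D1mx_wf_finite_beta Bwf.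
have bT g : g \notin TB -> D1_nuop B g = (fun i j t => (B i j).1 t).
  by move=> gT; apply/funext => i; apply/funext => j; apply/funext => t;
     rewrite /D1_nuop BTB // addr0.
have ab z : nuact (D1_nuop A) (nuact (D1_nuop B) z) = z.
  by rewrite (nuact_comp z aS bS) -D1_nuop_mul // AB D1_nuop_one nuact_id.
have b_surj := nuact_surj_of_L1_surjunctive L1 aS bS bT ab.
have ba : nucomp (D1_nuop B) (D1_nuop A) = @nuid G k n.+1.
  apply: nuact_inj => x; rewrite -(nuact_comp x bS aS) nuact_id.
  by have [z <-] := b_surj x; rewrite ab.
apply: (D1_nuop_inj Ginf); [exact: D1_mxmul_finite_beta | exact: D1_mxone_finite_beta |].
by rewrite D1_nuop_mul // ba D1_nuop_one.
Qed.

Section LinearOnFunctions.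
Variables (R : pzRingType) (X : Type) (U W : lmodType R) (f : (X -> U) -> W).
Hypothesis flin : forall a u v, f (fun m => a *: u m + v m) = a *: f u + f v.

Lemma linfun0 : f (fun _ => 0) = 0.
Proof.
have := flin 1 (fun _ => 0) (fun _ => 0); rewrite !scale1r addr0.
by move/(congr1 (fun z => z - f (fun _ => 0))); rewrite addrK subrr => /esym.
Qed.

Lemma linfunZ a u : f (fun m => a *: u m) = a *: f u.
Proof.
have := flin a u (fun _ => 0); rewrite linfun0 addr0 => <-.
by congr f; apply/funext => m; rewrite addr0.
Qed.

Lemma linfun_sum (I : Type) (r : seq I) (F : I -> X -> U) :
  f (fun m => \sum_(i <- r) F i m) = \sum_(i <- r) f (F i).
Proof.
elim: r => [|i r IH].
  rewrite big_nil -linfun0; congr f; apply/funext => m; exact: big_nil.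
rewrite big_cons -IH -[f (F i)]scale1r -flin; congr f.
by apply/funext => m; rewrite big_cons scale1r.
Qed.

End LinearOnFunctions.

Section SeparatingFunctional.
Variables (T : Type) (k : fieldType).

Definition subspace (Z : set (T -> k)) :=
  Z (fun _ => 0) /\ forall a u v, Z u -> Z v -> Z (fun t => a * u t + v t).

Lemma subspace_comb Z a b u v :
  subspace Z -> Z u -> Z v -> Z (fun t => a * u t + b * v t).
Proof.
move=> [Z0 Zlin] Zu Zv; apply: (Zlin) => //.
by have := Zlin b v _ Zv Z0; congr Z; apply/funext => t; rewrite addr0.
Qed.

Lemma subspace_scale Z a u : subspace Z -> Z u -> Z (fun t => a * u t).
Proof.
by move=> Zsub Zu; have := subspace_comb a 0 Zsub Zu Zu; congr Z; apply/funext => t; ring.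
Qed.

Variables (W : set (T -> k)) (e : T -> k).
Hypotheses (Wsub : subspace W) (We : ~ W e).

Lemma maximal_subspace_avoiding : exists A, [/\ subspace A, W `<=` A, ~ A e &
  forall B, A `<` B -> subspace B -> B e].
Proof.
pose good Z := [/\ subspace Z, W `<=` Z & ~ Z e].
pose P Z := Z = set0 \/ good Z.
have Pgood Z u : P Z -> Z u -> good Z by case=> [-> //|//].
have [A [PA Amax]] : exists A, P A /\ forall B, A `<` B -> ~ P B.
  apply: Zorn_bigcup => F FP Ftot.
  have [[Z0 [FZ0 [u0 Z0u]]]|none] := pselect (exists Z, F Z /\ exists u, Z u); last first.
    left; apply/seteqP; split => // u [Z FZ Zu].
    by apply: none; exists Z; split => //; exists u.
  have [[Z00 _] WZ0 _] := Pgood _ _ (FP _ FZ0) Z0u.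
  right; split.
  - split; first by exists Z0.
    move=> a u v [Z1 FZ1 Z1u] [Z2 FZ2 Z2v].
    have [[_ Z1lin] _ _] := Pgood _ _ (FP _ FZ1) Z1u.
    have [[_ Z2lin] _ _] := Pgood _ _ (FP _ FZ2) Z2v.
    have [Z12|Z21] := Ftot _ _ FZ1 FZ2.
    + by exists Z2 => //; apply: Z2lin => //; apply: Z12.
    + by exists Z1 => //; apply: Z1lin => //; apply: Z21.
  - by move=> w Ww; exists Z0 => //; apply: WZ0.
  - by move=> [Z FZ Ze]; have [_ _] := Pgood _ _ (FP _ FZ) Ze; exact.
have [Asub WA Ae] : good A.
  case: PA => [A0|//]; exfalso; apply: (Amax W); last by right; split.
  by rewrite A0; split => // /(_ _ (proj1 Wsub)).
exists A; split=> // B AB Bsub; apply: contrapT => Be; apply: (Amax B AB); right.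
by split => //; apply: subset_trans (proj1 AB).
Qed.

Lemma maximal_subspace_codim1 A : subspace A -> ~ A e ->
  (forall B, A `<` B -> subspace B -> B e) ->
  forall u, exists c, A (fun t => u t - c * e t).
Proof.
move=> Asub Ae Amax u; have [Au|nAu] := pselect (A u).
  by exists 0; have -> : (fun t => u t - 0 * e t) = u by apply/funext => t; ring.
pose B := [set w | exists a z, A z /\ w = (fun t => a * u t + z t)].
have AB : A `<` B.
  split; first by move=> z Az; exists 0, z; split => //; apply/funext => t; ring.
  move=> BA; apply: nAu; apply: BA; exists 1, (fun _ => 0); split; first exact: Asub.1.
  by apply/funext => t; ring.
have Bsub : subspace B.
  split; first by exists 0, (fun _ => 0); split; [exact: Asub.1 | apply/funext => t; ring].
  move=> a' w1 w2 [a1 [z1 [Az1 ->]]] [a2 [z2 [Az2 ->]]].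
  exists (a' * a1 + a2), (fun t => a' * z1 t + z2 t); split; first exact: Asub.2.
  by apply/funext => t; ring.
have [a [z [Az ez]]] := Amax B AB Bsub.
have a0 : a != 0.
  apply/eqP => a0; apply: Ae; rewrite ez a0.
  by have -> : (fun t => 0 * u t + z t) = z by apply/funext => t; ring.
exists a^-1; have := subspace_scale (- a^-1) Asub Az; congr A; apply/funext => t.
by rewrite ez; field.
Qed.

Lemma separating_functional : exists f : (T -> k) -> k,
  [/\ forall a u v, f (fun t => a * u t + v t) = a * f u + f v,
      forall w, W w -> f w = 0 & f e = 1].
Proof.
have [A [Asub WA Ae Amax]] := maximal_subspace_avoiding.
have decomp := maximal_subspace_codim1 Asub Ae Amax.
have coef_uniq u c c' :
    A (fun t => u t - c * e t) -> A (fun t => u t - c' * e t) -> c = c'.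
  move=> Ac Ac'; apply: contrapT => /eqP cc'; apply: Ae.
  have cc'0 : c' - c != 0 by rewrite subr_eq0 eq_sym.
  have := subspace_comb ((c' - c)^-1) (- (c' - c)^-1) Asub Ac Ac'; congr A.
  by apply/funext => t; field.
pose f u := projT1 (cid (decomp u)).
have fP u : A (fun t => u t - f u * e t) := projT2 (cid (decomp u)).
exists f; split.
- move=> a u v; apply: (coef_uniq (fun t => a * u t + v t)); first exact: fP.
  by have := subspace_comb a 1 Asub (fP u) (fP v); congr A; apply/funext => t; ring.
- move=> w Ww; apply: (coef_uniq w); first exact: fP.
  have -> : (fun t => w t - 0 * e t) = w by apply/funext => t; ring.
  exact: WA.
- apply: (coef_uniq e); first exact: fP.
  have -> : (fun t => e t - 1 * e t) = (fun _ => 0) by apply/funext => t; ring.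
  exact: Asub.1.
Qed.

End SeparatingFunctional.

Section RowFunctionals.
Variables (G : groupType) (k : fieldType) (n : nat).
Local Notation T := (G * 'I_n)%type.
Implicit Types (c : nuop G k n) (x : cfg G k n).

Definition delta_at (q : T) : T -> k := fun p => if p == q then 1 else 0.

Definition row_functional c h i : T -> k := fun p => c h i p.2 (h^-1 * p.1)%g.

Definition row_comb c (R : {fset G}) (w : G -> 'I_n -> k) : T -> k :=
  fun p => \sum_(h <- R) \sum_(i < n) w h i * row_functional c h i p.

Definition row_span c : set (T -> k) := [set u | exists R w, u = row_comb c R w].

Lemma row_comb_widen c (R R' : {fset G}) w : (R `<=` R')%fset ->
  row_comb c R w = row_comb c R' (fun h i => if h \in R then w h i else 0).
Proof.
move=> RR'; apply/funext => p; rewrite /row_comb big_seq [LHS](eq_bigr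
  (fun h => \sum_(i < n) (if h \in R then w h i else 0) * row_functional c h i p)).
  rewrite -big_seq; apply: big_fset_incl => // h _ /negbTE hR.
  by apply: big1 => i _; rewrite hR mul0r.
by move=> h hR; apply: eq_bigr => i _; rewrite hR.
Qed.

Lemma row_span_subspace c : subspace (row_span c).
Proof.
split; first by exists fset0, (fun _ _ => 0); apply/funext => p; rewrite /row_comb big_nil.
move=> a _ _ [R1 [w1 ->]] [R2 [w2 ->]].
exists (R1 `|` R2)%fset, (fun h i => a * (if h \in R1 then w1 h i else 0) +
                                    (if h \in R2 then w2 h i else 0)).
rewrite (row_comb_widen _ _ (fsubsetUl R1 R2)) (row_comb_widen _ _ (fsubsetUr R1 R2)).
apply/funext => p; rewrite /row_comb mulr_sumr -big_split; apply: eq_bigr => h _.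
by rewrite mulr_sumr -big_split; apply: eq_bigr => i _ /=; ring.
Qed.

Lemma sum_delta_at (X : {fset G}) g0 j0 x : g0 \in X ->
  \sum_(g <- X) \sum_(j < n) delta_at (g0, j0) (g, j) * x g j = x g0 j0.
Proof.
move=> g0X; rewrite (big_fsetD1 g0) //= big1_fset ?addr0; last first.
  move=> g; rewrite !inE => /andP[gg0 _] _; apply: big1 => j _.
  by rewrite /delta_at xpair_eqE (negbTE gg0) mul0r.
rewrite (bigD1 j0) //= big1 ?addr0; first by rewrite /delta_at eqxx mul1r.
by move=> j /negbTE jj0; rewrite /delta_at xpair_eqE eqxx jj0 mul0r.
Qed.

Lemma row_functional_delta c S h i : supported_in c S ->
  row_functional c h i =
  fun p => \sum_(t <- S) \sum_(j < n) c h i j t * delta_at ((h * t)%g, j) p.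
Proof.
move=> cS; apply/funext => -[g j'] /=; rewrite /row_functional /=.
have [hg_in|hg_out] := boolP ((h^-1 * g)%g \in S); last first.
  rewrite cS // big1_seq // => t /andP[_ tS]; apply: big1 => j _.
  rewrite /delta_at xpair_eqE; case: eqP => [gE|_]; last by rewrite mulr0.
  by move: hg_out; rewrite gE mulKg tS.
rewrite (big_fsetD1 _ hg_in) /= big1_fset ?addr0; last first.
  move=> t; rewrite !inE => /andP[tg _] _; apply: big1 => j _.
  rewrite /delta_at xpair_eqE; case: eqP => [gE|_]; last by rewrite mulr0.
  by move: tg; rewrite gE mulKg eqxx.
rewrite (bigD1 j') //= big1 ?addr0; first by rewrite /delta_at mulVKg !eqxx mulr1.
by move=> j /negbTE jj'; rewrite /delta_at xpair_eqE [j' == j]eq_sym jj' andbF mulr0.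
Qed.

Lemma nuact_functional c S (f : (T -> k) -> k) h i : supported_in c S ->
  (forall a u v, f (fun p => a * u p + v p) = a * f u + f v) ->
  nuact c (fun g j => f (delta_at (g, j))) h i = f (row_functional c h i).
Proof.
move=> cS flin.
pose f' := f : (T -> k^o) -> k^o.
have flin' : forall a u v, f' (fun p => a *: u p + v p) = a *: f' u + f' v := flin.
rewrite (row_functional_delta h i cS) -/f' (linfun_sum flin') (nuact_supp _ _ _ cS).
apply: eq_bigr => t _; rewrite (linfun_sum flin'); apply: eq_bigr => j _.
by rewrite (linfunZ flin').
Qed.

(* Otherwise a linear form vanishing on the row span but not at delta_at q
   would be a nonzero configuration in the kernel of nuact c. *)
Lemma delta_in_row_span c S q : supported_in c S -> injective (nuact c) ->
  row_span c (delta_at q).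
Proof.
move=> cS cinj; apply: contrapT => nq.
have [f [flin f_span fq]] := separating_functional (row_span_subspace c) nq.
pose x : cfg G k n := fun g j => f (delta_at (g, j)).
suff /(congr1 (fun z => z q.1 q.2)) : x = (fun _ _ => 0).
  by rewrite /x -surjective_pairing fq => /eqP; rewrite oner_eq0.
apply: cinj; apply/funext => h; apply/funext => i.
rewrite (nuact_functional h i cS flin) (nuact_supp _ _ _ cS) big1 => [|t _]; last first.
  by apply: big1 => j _; rewrite mulr0.
apply: f_span; exists [fset h]%fset, (fun h' i' => ((h' == h) && (i' == i))%:R).
apply/funext => p; rewrite /row_comb big_seq_fset1 (bigD1 i) //= !eqxx mul1r.
by rewrite big1 ?addr0 // => i' /negbTE ->; rewrite andbF mul0r.
Qed.

Lemma coord_of_row_comb c S R w g0 j0 : supported_in c S ->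
  delta_at (g0, j0) = row_comb c R w ->
  forall x, x g0 j0 = \sum_(h <- R) \sum_(i < n) w h i * nuact c x h i.
Proof.
move=> cS dR x; pose X := (g0 |` mulfset R S)%fset.
rewrite -(@sum_delta_at X) ?fset1U1 // dR /row_comb.
under eq_bigr => g _ do under eq_bigr => j _ do rewrite mulr_suml.
under eq_bigr => g _ do rewrite exchange_big.
rewrite exchange_big big_seq [RHS]big_seq; apply: eq_bigr => h hR.
under eq_bigr => g _ do under eq_bigr => j _ do rewrite mulr_suml.
under eq_bigr => g _ do rewrite exchange_big.
rewrite exchange_big; apply: eq_bigr => i _.
rewrite (nuact_supp _ _ _ cS) mulr_sumr -(@big_fset_translate _ _
  (fun t => w h i * \sum_(j < n) c h i j t * x (h * t)%g j) h S X); last first.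
- by move=> t tS; rewrite fset1Ur // mulfsetP.
- by move=> t tS; rewrite big1 ?mulr0 // => j _; rewrite cS // mul0r.
apply: eq_bigr => g _; rewrite mulr_sumr; apply: eq_bigr => j _.
by rewrite /row_functional /= mulVKg mulrA.
Qed.

Lemma nuact_inj_row_inverse c S g0 j0 : supported_in c S -> injective (nuact c) ->
  exists (E : {fset G}) (e : 'I_n -> G -> k), (forall i t, t \notin E -> e i t = 0) /\
  forall x, x g0 j0 = \sum_(t \in [set: G]) \sum_(i < n) e i t * nuact c x (g0 * t)%g i.
Proof.
move=> cS cinj; have [R [w dR]] := delta_in_row_span (g0, j0) cS cinj.
exists [fset (g0^-1 * h)%g | h in R]%fset,
  (fun i t => if (g0 * t)%g \in R then w (g0 * t)%g i else 0); split.
  move=> i t tE; case: ifPn => // g0tR; exfalso; move/negP: tE; apply.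
  by apply/imfsetP; exists (g0 * t)%g; rewrite ?mulKg.
move=> x; rewrite (coord_of_row_comb cS dR x).
pose F h := \sum_(i < n) (if h \in R then w h i else 0) * nuact c x h i.
rewrite (eq_fsbigr (fun t => F (g0 * t)%g)) // -(reindex_fsbigT (fun t => (g0 * t)%g) F).
  rewrite (fsbigT_fset (S := R)) => [|h /negbTE hR]; last first.
    by apply: big1 => i _; rewrite hR mul0r.
  by rewrite big_seq [RHS]big_seq; apply: eq_bigr => h hR; apply: eq_bigr => i _; rewrite hR.
by exists (fun t => (g0^-1 * t)%g) => t; rewrite ?mulKg ?mulVKg.
Qed.

End RowFunctionals.

Section LeftInverse.
Variables (G : groupType) (k : fieldType) (n : nat).
Hypothesis Ginf : infinite_set [set: G].
Implicit Types (c d : nuop G k n).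
Local Notation coefs := ('I_n -> 'I_n -> G -> k).

Lemma const_part_supported_in c (c0 : coefs) (S T : {fset G}) :
  supported_in c S -> (forall g, g \notin T -> c g = c0) ->
  supported_in (fun _ : G => c0) S.
Proof.
move=> cS cT; have [g1 g1T] := infinite_setT_fresh T Ginf.
by move=> _ i j t tS; rewrite -(cT _ g1T); apply: cS.
Qed.

Lemma nuact_eq_at c c' x h : c h = c' h -> nuact c x h = nuact c' x h.
Proof. by move=> E; apply/funext => i; rewrite /nuact E. Qed.

Lemma const_nuop_left_inv (c0 : coefs) S :
  supported_in (fun _ : G => c0) S -> injective (nuact (fun _ : G => c0)) ->
  exists (S0 : {fset G}) (d0 : coefs), supported_in (fun _ : G => d0) S0 /\
  forall x, nuact (fun _ : G => d0) (nuact (fun _ : G => c0) x) = x.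
Proof.
move=> c0S c0inj.
have rows j : exists Ee : {fset G} * ('I_n -> G -> k),
    (forall i t, t \notin Ee.1 -> Ee.2 i t = 0) /\ forall x, x 1%g j =
    \sum_(t \in [set: G]) \sum_(i < n) Ee.2 i t * nuact (fun _ => c0) x (1 * t)%g i.
  by have [E [e He]] := nuact_inj_row_inverse 1%g j c0S c0inj; exists (E, e).
have [r rP] := choice rows.
have [S0 S0P] : exists S0 : {fset G}, forall t,
    (\bigcup_(j in [set: 'I_n]) [set` (r j).1]) t -> t \in S0.
  by apply: finite_set_fset_sub; apply: bigcup_finite => // j _; exact: finite_fset.
exists S0, (fun j i t => (r j).2 i t); split.
  move=> _ j i t tS0; apply: (rP j).1; apply: contra tS0 => tr.
  by apply: S0P; exists j.
move=> x; apply/funext => g0; apply/funext => j0.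
have := (rP j0).2 (fun h => x (g0 * h)%g); rewrite mulg1 => ->.
apply: eq_fsbigr => t _; apply: eq_bigr => i _; rewrite mul1g; congr (_ * _).
by rewrite /nuact; apply: eq_fsbigr => t' _; apply: eq_bigr => j _; rewrite mulgA.
Qed.

(* Near infinity c agrees with c0, so the left inverse d0 of c0 works there;
   at the finitely many remaining positions use the rows of
   nuact_inj_row_inverse. *)
Lemma nuact_left_inv c (c0 : coefs) (S T : {fset G}) :
  supported_in c S -> (forall g, g \notin T -> c g = c0) ->
  injective (nuact c) -> injective (nuact (fun _ : G => c0)) ->
  exists d (d0 : coefs) (Sd Td : {fset G}),
  [/\ supported_in d Sd, supported_in (fun _ : G => d0) Sd,
      (forall g, g \notin Td -> d g = d0) & forall x, nuact d (nuact c x) = x].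
Proof.
move=> cS cT cinj c0inj; have c0S := const_part_supported_in cS cT.
have [S0 [d0 [d0S d0inv]]] := const_nuop_left_inv c0S c0inj.
pose B := [fset (a * t^-1)%g | a in T, t in S0]%fset.
have rows (p : G * 'I_n) : exists Ee : {fset G} * ('I_n -> G -> k),
    (forall i t, t \notin Ee.1 -> Ee.2 i t = 0) /\ forall x, x p.1 p.2 =
    \sum_(t \in [set: G]) \sum_(i < n) Ee.2 i t * nuact c x (p.1 * t)%g i.
  by have [E [e He]] := nuact_inj_row_inverse p.1 p.2 cS cinj; exists (E, e).
have [r rP] := choice rows.
pose d : nuop G k n := fun g j => if g \in B then (r (g, j)).2 else d0 j.
have [Sd SdP] : exists Sd : {fset G}, forall t,
    ([set` S0] `|` \bigcup_(p in [set` B] `*` [set: 'I_n]) [set` (r p).1]) t -> t \in Sd.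
  apply: finite_set_fset_sub; rewrite finite_setU; split; first exact: finite_fset.
  apply: bigcup_finite => [|p _]; last exact: finite_fset.
  by apply: finite_setX; [exact: finite_fset | exact: finite_finset].
have d0Sd : supported_in (fun _ : G => d0) Sd.
  by move=> g j i t tSd; apply: (d0S g); apply: contra tSd => tS0; apply: SdP; left.
have dSd : supported_in d Sd.
  move=> g j i t tSd; rewrite /d; case: ifPn => gB; last exact: d0Sd.
  apply: (rP (g, j)).1; apply: contra tSd => tr; apply: SdP; right.
  by exists (g, j).
exists d, d0, Sd, B; split => //; first by move=> g /negbTE gB; rewrite /d gB.
move=> x; apply/funext => g0; apply/funext => j0.
have [g0B|g0B] := boolP (g0 \in B).
  rewrite [RHS](rP (g0, j0)).2 /nuact; apply: eq_fsbigr => t _.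
  by apply: eq_bigr => i _; rewrite /d g0B.
transitivity (nuact (fun _ => d0) (nuact (fun _ => c0) x) g0 j0); last by rewrite d0inv.
rewrite (nuact_supp _ _ _ dSd) (nuact_supp _ _ _ d0Sd).
apply: eq_big_seq => t tSd; apply: eq_bigr => i _; rewrite /d (negbTE g0B).
have [tS0|tS0] := boolP (t \in S0); last by rewrite (d0S g0) // !mul0r.
congr (_ * _); rewrite (@nuact_eq_at _ (fun _ => c0)) //; apply: cT.
apply: contra g0B => g0tT; apply/imfset2P; exists (g0 * t)%g => //.
by exists t => //; rewrite mulgK.
Qed.

End LeftInverse.

Lemma nuact_surj_of_stably_finite (G : groupType) (k : fieldType) n
    (c : nuop G k n) c0 (S T : {fset G}) :
  infinite_set [set: G] -> D1_stably_finite G k ->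
  supported_in c S -> (forall g, g \notin T -> c g = c0) ->
  injective (nuact c) -> injective (nuact (fun _ : G => c0)) ->
  forall y, exists x, nuact c x = y.
Proof.
move=> Ginf SF; case: n c c0 => [|n] c c0 cS cT cinj c0inj y.
  by exists y; apply/funext => g; apply/funext => -[].
have c0S := const_part_supported_in Ginf cS cT.
have [d [d0 [Sd [Td [dS d0S dT dc]]]]] := nuact_left_inv Ginf cS cT cinj c0inj.
have Awf := D1mx_of_nuop_wf dS d0S dT; have Bwf := D1mx_of_nuop_wf cS c0S cT.
have AB : D1_mxmul (D1mx_of_nuop d d0) (D1mx_of_nuop c c0) = @D1_mxone G k n.+1.
  apply: (D1_nuop_inj Ginf); [exact: D1_mxmul_finite_beta | exact: D1_mxone_finite_beta |].
  rewrite D1_nuop_mul // !D1_nuop_of D1_nuop_one; apply: nuact_inj => x.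
  by rewrite -(nuact_comp x dS cS) dc nuact_id.
have := congr1 (@D1_nuop _ _ _) (SF n _ _ Awf Bwf AB).
rewrite D1_nuop_mul // !D1_nuop_of D1_nuop_one => cd.
by exists (nuact d y); rewrite (nuact_comp y cS dS) cd nuact_id.
Qed.

Section OrbitClosure.
Variables (G : groupType) (k : fieldType) (V : vectType k) (M : {fset G}).
Implicit Types (s : G -> (M -> V) -> V).

Lemma in_orbit_closure_refl s : in_orbit_closure s s.
Proof. by move=> F; exists 1%g => h _; rewrite /shift_rule invg1 mul1g. Qed.

(* Translating far enough moves any finite window out of the finite set where
   s differs from s0. *)
Lemma in_orbit_closure_const s (s0 : (M -> V) -> V) (F : {fset G}) :
  infinite_set [set: G] -> (forall g, g \notin F -> s g = s0) ->
  in_orbit_closure s (fun _ => s0).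
Proof.
move=> Ginf Fs0 F'.
have [g gX] := infinite_setT_fresh [fset (h * f^-1)%g | h in F', f in F]%fset Ginf.
exists g => h hF'; rewrite /shift_rule Fs0 //; apply: contra gX => ghF.
apply/imfset2P; exists h => //; exists (g^-1 * h)%g => //.
have -> : ((g^-1 * h)^-1 = h^-1 * g)%g.
  by apply: mulg1_eq; rewrite -mulgA mulVKg mulVg.
by rewrite mulVKg.
Qed.

End OrbitClosure.

Import VectorInternalTheory.

Section LocalRuleCoefficients.
Variables (G : groupType) (k : fieldType) (V : vectType k) (M : {fset G}).
Local Notation n := (dim V).

Definition coord_cfg (x : G -> V) : cfg G k n := fun h j => v2r (x h) 0 j.

Definition cfg_vec (z : cfg G k n) : G -> V := fun h => r2v (\row_j z h j).

Lemma coord_cfgK : cancel cfg_vec coord_cfg.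
Proof. by move=> z; apply/funext => h; apply/funext => j; rewrite /coord_cfg r2vK mxE. Qed.

Lemma coord_cfg_inj : injective coord_cfg.
Proof.
move=> x1 x2 E; apply/funext => h; apply: v2r_inj; apply/rowP => j.
exact: (congr1 (fun z => z h j) E).
Qed.

Definition unit_pattern (m : M) (j : 'I_n) : M -> V :=
  fun m' => if m' == m then r2v (delta_mx 0 j) else 0.

Definition rule_coef (f : (M -> V) -> V) : 'I_n -> 'I_n -> G -> k :=
  fun i j t => oapp (fun m : M => v2r (f (unit_pattern m j)) 0 i) 0 (insub t).

Lemma rule_coef_supported_in (p : G -> (M -> V) -> V) :
  supported_in (fun h => rule_coef (p h)) M.
Proof. by move=> h i j t tM; rewrite /rule_coef insubN. Qed.

Lemma pattern_decomp (u : M -> V) :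
  u = fun m' => \sum_(m : M) \sum_(j < n) v2r (u m) 0 j *: unit_pattern m j m'.
Proof.
apply/funext => m'; rewrite (bigD1 m') //= [X in _ + X]big1 ?addr0; last first.
  move=> m /negbTE mm'; apply: big1 => j _.
  by rewrite /unit_pattern eq_sym mm' scaler0.
apply: v2r_inj; rewrite linear_sum {1}[v2r (u m')]row_sum_delta.
by apply: eq_bigr => j _; rewrite /unit_pattern eqxx linearZ /= r2vK.
Qed.

Lemma v2r_rule f u i : is_linear_local f ->
  v2r (f u) 0 i = \sum_(m : M) \sum_(j < n) rule_coef f i j (val m) * v2r (u m) 0 j.
Proof.
move=> flin; rewrite {1}(pattern_decomp u) (linfun_sum flin) linear_sum summxE.
apply: eq_bigr => m _; rewrite (linfun_sum flin) linear_sum summxE.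
apply: eq_bigr => j _; rewrite (linfunZ flin) linearZ mxE /rule_coef valK.
by rewrite mulrC.
Qed.

Lemma coord_sigma (p : G -> (M -> V) -> V) x : local_rules p ->
  coord_cfg (sigma p x) = nuact (fun h => rule_coef (p h)) (coord_cfg x).
Proof.
move=> plin; apply/funext => g; apply/funext => i.
rewrite /coord_cfg /sigma v2r_rule // (nuact_supp _ _ _ (rule_coef_supported_in p)).
rewrite big_seq_fsetE /=; apply: eq_bigr => m _; apply: eq_bigr => j _.
by rewrite /shift_cfg invgK.
Qed.

End LocalRuleCoefficients.

Lemma stably_finite_L1_surjunctive (G : groupType) :
  infinite_set [set: G] -> (forall k : fieldType, D1_stably_finite G k) ->
  L1_surjunctive G.
Proof.
move=> Ginf SF k V M s lin [F [s0 Fs0]] si y.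
have [g1 g1F] := infinite_setT_fresh F Ginf.
have s0lin : local_rules (fun _ : G => s0) by move=> _; rewrite -(Fs0 _ g1F).
have nuact_inj_of p : in_orbit_closure s p -> local_rules p ->
    injective (nuact (fun h => rule_coef (p h))).
  move=> ps plin z1 z2 E; rewrite -(coord_cfgK z1) -(coord_cfgK z2); congr coord_cfg.
  by apply: (si p ps); apply: coord_cfg_inj; rewrite !coord_sigma // !coord_cfgK E.
have [|z sz] := nuact_surj_of_stably_finite (c0 := rule_coef s0) (T := F)
  Ginf (SF k) (rule_coef_supported_in s) _ (nuact_inj_of s (in_orbit_closure_refl s) lin)
  (nuact_inj_of _ (in_orbit_closure_const Ginf Fs0) s0lin) (coord_cfg y).
  by move=> g gF; rewrite Fs0.
by exists (cfg_vec z); apply: coord_cfg_inj; rewrite coord_sigma // coord_cfgK.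
Qed.

Theorem corollary7p3 (G : groupType) (Ginf : infinite_set [set: G]) :
  L1_surjunctive G <-> (forall k : fieldType, D1_stably_finite G k).
Proof.
split; [exact: L1_surjunctive_stably_finite | exact: stably_finite_L1_surjunctive].
Qed.
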